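(* Let $\Lambda=(\lambda_1,\lambda_2)\in(0,\infty)^2$, $\phi\in[0,1)$ and $0\le\theta<\theta'\le 1$. Let $(X_1,X_2)\sim\mathcal{BZIP}^-(\Lambda,\theta,\phi)$ and $(X_1',X_2')\sim\mathcal{BZIP}^-(\Lambda,\theta',\phi)$. Then $(X_1',X_2')\prec_{PQD}(X_1,X_2)$, i.e. $H^-_{\Lambda,\phi,\theta'}(x_1,x_2)\le H^-_{\Lambda,\phi,\theta}(x_1,x_2)$ for all $(x_1,x_2)\in\mathbb{R}^2$, where $H^-_{\Lambda,\phi,\vartheta}$ is the joint distribution function of $\mathcal{BZIP}^-(\Lambda,\vartheta,\phi)$.
   Context: For $\mu>0$, $G_\mu$ denotes the distribution function of the Poisson distribution with mean $\mu$, and $G_\mu^{-1}(u)=\inf\{x\in\mathbb{N}:G_\mu(x)\ge u\}$ its quantile function (for $\mu=0$, $G_0^{-1}\equiv 0$). The model $\mathcal{BZIP}^{\pm}(\Lambda,\theta,\phi)$, with $\Lambda=(\lambda_1,\lambda_2)\in(0,\infty)^2$, $\theta\in[0,1]$, $\phi\in[0,1)$, is the law of $(X_1,X_2)=W\,(T_1,T_2)$, where: $W\sim$ Bernoulli$(1-\phi)$; $T_j=Y_j+Z_j$ for $j=1,2$; $Y_j\sim\mathcal{P}((1-\theta)\lambda_j)$; $U\sim\mathcal U(0,1)$; in $\mathcal{BZIP}^+$, $(Z_1,Z_2)=(G^{-1}_{\theta\lambda_1}(U),G^{-1}_{\theta\lambda_2}(U))$, and in $\mathcal{BZIP}^-$,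 $(Z_1,Z_2)=(G^{-1}_{\theta\lambda_1}(U),G^{-1}_{\theta\lambda_2}(1-U))$; $W$, $Y_1$, $Y_2$, $U$ are mutually independent. For random pairs with the same marginals, $(A_1,A_2)\prec_{PQD}(B_1,B_2)$ means $P(A_1\le x_1,A_2\le x_2)\le P(B_1\le x_1,B_2\le x_2)$ for all $x_1,x_2$. *)

From HB Require Import structures.
From mathcomp Require Import all_boot all_order all_algebra.
From mathcomp Require Import all_classical all_reals all_analysis.
Set Implicit Arguments. Unset Strict Implicit. Unset Printing Implicit Defensive.
Import Order.TTheory GRing.Theory Num.Theory.
Local Open Scope classical_set_scope.
Local Open Scope ring_scope.

(* Poisson probability mass function with mean mu >= 0 (0^0 = 1, so mu = 0
   gives the point mass at 0). *)
Definition poisson_pmf (R : realType) (mu : R) (k : nat) : R :=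
  expR (- mu) * mu ^+ k / (k`!)%:R.

Definition poisson_cdf (R : realType) (mu : R) (x : nat) : R :=
  \sum_(k < x.+1) poisson_pmf mu k.

(* Quantile function G_mu^{-1}(u) = inf {x in N : G_mu(x) >= u};
   G_0^{-1} = 0.  When the set is empty (only possible for u >= 1, a null
   event for a uniform U) we return 0 by convention. *)
Definition poisson_quantile (R : realType) (mu u : R) : nat :=
  if mu == 0 then 0%N else
  match pselect (exists x : nat, u <= poisson_cdf mu x) with
  | left h => ex_minn h
  | right _ => 0%N
  end.

Definition BZIPm_inputs (R : realType) (d : measure_display) (T : measurableType d)
  (P : probability T R) (W Y1 Y2 U : T -> R) (lam1 lam2 theta phi : R) : Prop :=
  [/\ measurable_fun setT W, measurable_fun setT Y1, measurable_fun setT Y2,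
      measurable_fun setT U &
  [/\
      P [set t | W t = 1] = (1 - phi)%:E /\ P [set t | W t = 0] = phi%:E,
      (forall k : nat, P [set t | Y1 t = k%:R] = (poisson_pmf ((1 - theta) * lam1) k)%:E),
      (forall k : nat, P [set t | Y2 t = k%:R] = (poisson_pmf ((1 - theta) * lam2) k)%:E),
      (forall r : R, 0 <= r <= 1 -> P [set t | U t <= r] = r%:E) &
      (forall A B C D : set R, measurable A -> measurable B -> measurable C ->
         measurable D ->
         P (W @^-1` A `&` Y1 @^-1` B `&` Y2 @^-1` C `&` U @^-1` D) =
         (P (W @^-1` A) * P (Y1 @^-1` B) * P (Y2 @^-1` C) * P (U @^-1` D))%E)]].

Definition BZIPm_X1 (R : realType) (T : Type) (W Y1 U : T -> R) (lam1 theta : R)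
  (t : T) : R :=
  W t * (Y1 t + (poisson_quantile (theta * lam1) (U t))%:R).
Definition BZIPm_X2 (R : realType) (T : Type) (W Y2 U : T -> R) (lam2 theta : R)
  (t : T) : R :=
  W t * (Y2 t + (poisson_quantile (theta * lam2) (1 - U t))%:R).

Definition joint_cdf (R : realType) (d : measure_display) (T : measurableType d)
  (P : probability T R) (X1 X2 : T -> R) (x1 x2 : R) : \bar R :=
  P [set t | X1 t <= x1 /\ X2 t <= x2].

From Pilot Require Import Defs.
From HB Require Import structures.
From mathcomp Require Import all_boot all_order all_algebra.
From mathcomp Require Import all_classical all_reals all_analysis.
From mathcomp Require Import ring lra zify.
Import Order.TTheory GRing.Theory Num.Theory.
Local Open Scope classical_set_scope.
Local Open Scope ring_scope.
Set Implicit Arguments. Unset Strict Implicit. Unset Printing Implicit Defensive.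
(* all_analysis has its own [poisson_pmf]; re-importing [Defs] makes the
   unqualified names refer to the definitions. *)
Import Defs.

(* For [x1, x2 >= 0] the joint distribution function of BZIP^-(Lambda, theta, phi)
   at [(x1, x2)] equals [phi + (1 - phi) H(floor x1, floor x2)], where [H] is the
   distribution function of [(Y1 + Z1, Y2 + Z2)], with [Y] independent
   Poisson((1 - theta) lambda_j) and [Z] the countermonotone pair with
   Poisson(theta lambda_j) marginals, whose distribution function is the lower
   Frechet bound [max(0, G1 + G2 - 1)].  Since Poisson laws convolve, passing
   from theta to theta' moves an independent Poisson((theta' - theta) lambda_j)
   summand [C_j] from [Y_j] to [Z_j].  Conditionally on [Y], this replaces the
   distribution function of [(Z1 + C1, Z2 + C2)] by the lower Frechet bound of
   the same marginals, which is smaller. *)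

Section poisson.
Variable R : realType.
Implicit Types (mu x y c e : R) (h g : nat -> R).

Lemma poisson_pmf_ge0 mu k : 0 <= mu -> 0 <= poisson_pmf mu k.
Proof. by move=> mu0; rewrite divr_ge0 ?mulr_ge0 ?expR_ge0 ?exprn_ge0. Qed.

Lemma poisson_cdf_ge0 mu n : 0 <= mu -> 0 <= poisson_cdf mu n.
Proof. by move=> mu0; apply: sumr_ge0 => k _; exact: poisson_pmf_ge0. Qed.

Lemma poisson_cdf_series mu n :
  poisson_cdf mu n = expR (- mu) * series (exp_coeff mu) n.+1.
Proof.
rewrite /poisson_cdf /series /= big_mkord mulr_sumr; apply: eq_bigr => k _.
by rewrite /poisson_pmf /exp_coeff /= mulrA.
Qed.

Lemma poisson_cdf0 n : poisson_cdf (0 : R) n = 1.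
Proof.
rewrite /poisson_cdf big_ord_recl big1 => [|k _]; last first.
  by rewrite /poisson_pmf expr0n /= mulr0 mul0r.
by rewrite /poisson_pmf oppr0 expR0 expr0 mul1r divr1 addr0.
Qed.

Lemma nondecreasing_exp_series mu : 0 <= mu ->
  {homo series (exp_coeff mu) : m n / (m <= n)%N >-> m <= n}.
Proof.
move=> mu0 m n mn; rewrite /series /= (big_cat_nat (leq0n m) mn) /= lerDl.
by apply: sumr_ge0 => k _; exact: exp_coeff_ge0.
Qed.

Lemma poisson_cdf_le mu m n : 0 <= mu -> (m <= n)%N ->
  poisson_cdf mu m <= poisson_cdf mu n.
Proof.
move=> mu0 mn; rewrite !poisson_cdf_series ler_wpM2l ?expR_ge0 //.
exact: nondecreasing_exp_series.
Qed.

Lemma poisson_cdf_le1 mu n : 0 <= mu -> poisson_cdf mu n <= 1.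
Proof.
move=> mu0; rewrite poisson_cdf_series -(expRxMexpNx_1 mu) mulrC.
rewrite ler_wpM2r ?expR_ge0 //.
exact: nondecreasing_cvgn_le (nondecreasing_exp_series mu0)
  (is_cvg_series_exp_coeff mu) n.+1.
Qed.

Lemma poisson_cdf_near1 mu e : 0 <= mu -> 0 < e ->
  exists n, 1 - e < poisson_cdf mu n.
Proof.
move=> mu0 e0.
have lt_expR : expR mu * (1 - e / 2) < expR mu.
  by rewrite -[ltRHS]mulr1 ltr_pM2l ?expR_gt0 // gtrBl divr_gt0.
have [N _ HN] := lt_lim (nondecreasing_exp_series mu0)
  (is_cvg_series_exp_coeff mu) lt_expR.
exists N; rewrite poisson_cdf_series.
apply: (@lt_le_trans _ _ (expR (- mu) * (expR mu * (1 - e / 2)))).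
  rewrite mulrA (mulrC (expR (- mu))) expRxMexpNx_1 mul1r.
  by rewrite ltrD2l ltrN2 gtr_pMr ?invf_lt1 ?ltr1n.
by rewrite ler_wpM2l ?expR_ge0 //; apply: HN => /=.
Qed.

Lemma poisson_pmfD x y n :
  poisson_pmf (x + y) n =
  \sum_(0 <= i < n.+1) poisson_pmf x i * poisson_pmf y (n - i)%N.
Proof.
rewrite /poisson_pmf (addrC x y) exprDn big_mkord mulr_sumr mulr_suml.
apply: eq_bigr => -[i /= lein] _.
have binE : 'C(n, i)%:R * (i`!%:R * (n - i)`!%:R) = n`!%:R :> R.
  by rewrite -!natrM bin_fact.
have fact_neq0 m : m`!%:R != 0 :> R by rewrite pnatr_eq0 -lt0n fact_gt0.
rewrite -binE mulr_natr opprD expRD; field.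
by rewrite !fact_neq0 pnatr_eq0 -lt0n bin_gt0.
Qed.

(* [poisson_conv mu h n] is [E[h(n - Y); Y <= n]] for [Y ~ Poisson(mu)]. *)
Definition poisson_conv mu h n : R :=
  \sum_(0 <= k < n.+1) poisson_pmf mu k * h (n - k)%N.

Lemma eq_poisson_conv mu h g n : (forall m, h m = g m) ->
  poisson_conv mu h n = poisson_conv mu g n.
Proof. by move=> hg; apply: eq_bigr => k _; rewrite hg. Qed.

Lemma ler_poisson_conv mu h g n : 0 <= mu -> (forall m, h m <= g m) ->
  poisson_conv mu h n <= poisson_conv mu g n.
Proof.
move=> mu0 hg; apply: ler_sum => k _.
by rewrite ler_wpM2l ?poisson_pmf_ge0.
Qed.

Lemma poisson_conv_ge0 mu h n : 0 <= mu -> (forall m, 0 <= h m) ->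
  0 <= poisson_conv mu h n.
Proof.
by move=> mu0 h0; apply: sumr_ge0 => k _; rewrite mulr_ge0 ?poisson_pmf_ge0.
Qed.

Lemma poisson_cdf_conv mu n : poisson_cdf mu n = poisson_conv mu (fun=> 1) n.
Proof. by rewrite /poisson_conv big_mkord; apply: eq_bigr => k _; rewrite mulr1. Qed.

Lemma poisson_conv_affine mu c e h n :
  poisson_conv mu (fun m => c * h m + e) n =
  c * poisson_conv mu h n + e * poisson_cdf mu n.
Proof.
rewrite poisson_cdf_conv /poisson_conv !mulr_sumr -big_split.
by apply: eq_bigr => k _; rewrite mulr1 mulrDr mulrCA [e * _]mulrC.
Qed.

Lemma sum_antidiagonals (f : nat -> nat -> R) n :
  \sum_(0 <= k < n.+1) \sum_(0 <= i < k.+1) f i (k - i)%N =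
  \sum_(0 <= i < n.+1) \sum_(0 <= j < (n - i).+1) f i j.
Proof.
elim: n => [|n IHn]; first by rewrite !big_nat1.
rewrite big_nat_recr //= IHn [RHS]big_nat_recr //= subnn big_nat1.
under [in RHS]eq_big_nat => i /andP[_ lt_in] do rewrite subSn // big_nat_recr //=.
rewrite big_split /= -addrA; congr (_ + _).
rewrite big_nat_recr //= subnn; congr (_ + _).
by apply: eq_big_nat => i /andP[_ lt_in]; rewrite subSn.
Qed.

Lemma poisson_convD x y h n :
  poisson_conv (x + y) h n = poisson_conv x (poisson_conv y h) n.
Proof.
pose f i j := poisson_pmf x i * poisson_pmf y j * h (n - (i + j))%N.
transitivity (\sum_(0 <= k < n.+1) \sum_(0 <= i < k.+1) f i (k - i)%N).
  apply: eq_bigr => k _; rewrite poisson_pmfD mulr_suml.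
  by apply: eq_big_nat => i /andP[_ lt_ik]; rewrite /f subnKC.
rewrite sum_antidiagonals; apply: eq_bigr => i _; rewrite mulr_sumr.
by apply: eq_bigr => j _; rewrite /f subnDA mulrA.
Qed.

Lemma poisson_cdfD x y n :
  poisson_cdf (x + y) n = poisson_conv x (poisson_cdf y) n.
Proof.
rewrite poisson_cdf_conv poisson_convD.
by apply: eq_poisson_conv => m; rewrite poisson_cdf_conv.
Qed.

Lemma poisson_conv_exchange x y (f : nat -> nat -> R) m n :
  poisson_conv x (fun i => poisson_conv y (f i) n) m =
  poisson_conv y (fun j => poisson_conv x (f^~ j) m) n.
Proof.
rewrite /poisson_conv; under eq_bigr => i _ do rewrite mulr_sumr.
rewrite exchange_big /=; apply: eq_bigr => j _; rewrite mulr_sumr.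
by apply: eq_bigr => i _; rewrite mulrCA.
Qed.

End poisson.

Section countermonotone.
Variable R : realType.

(* The lower Frechet bound: the joint distribution function of the
   countermonotone pair [(G_a1^-1(U), G_a2^-1(1 - U))]. *)
Definition countermonotone_cdf (a1 a2 : R) (m n : nat) : R :=
  Num.max 0 (poisson_cdf a1 m + poisson_cdf a2 n - 1).

(* The joint distribution function of [(Y1 + Z1, Y2 + Z2)] at [(K, L)], with
   [Y] independent Poisson of means [b] and [Z] countermonotone Poisson of
   means [a]. *)
Definition bzipm_core_cdf (b1 b2 a1 a2 : R) (K L : nat) : R :=
  poisson_conv b1 (fun m => poisson_conv b2 (countermonotone_cdf a1 a2 m) L) K.

Lemma bzipm_core_cdf_ge0 (b1 b2 a1 a2 : R) K L : 0 <= b1 -> 0 <= b2 ->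
  0 <= bzipm_core_cdf b1 b2 a1 a2 K L.
Proof.
move=> b10 b20; apply: poisson_conv_ge0 => // m.
by apply: poisson_conv_ge0 => // n; rewrite le_max lexx.
Qed.

Lemma countermonotone_cdf_le_core (a1 a2 c1 c2 : R) S T :
  0 <= a1 -> 0 <= a2 -> 0 <= c1 -> 0 <= c2 ->
  countermonotone_cdf (a1 + c1) (a2 + c2) S T <= bzipm_core_cdf c1 c2 a1 a2 S T.
Proof.
move=> a10 a20 c10 c20.
set A := poisson_cdf c1 S; set B := poisson_cdf c2 T.
set g1 := poisson_conv c1 (poisson_cdf a1) S.
set g2 := poisson_conv c2 (poisson_cdf a2) T.
have g1E : poisson_cdf (a1 + c1) S = g1 by rewrite addrC poisson_cdfD.
have g2E : poisson_cdf (a2 + c2) T = g2 by rewrite addrC poisson_cdfD.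
have g1_ge0 : 0 <= g1 by rewrite -g1E poisson_cdf_ge0 ?addr_ge0.
have g2_ge0 : 0 <= g2 by rewrite -g2E poisson_cdf_ge0 ?addr_ge0.
have g1_leA : g1 <= A.
  by rewrite /A poisson_cdf_conv; apply: ler_poisson_conv => // m; exact: poisson_cdf_le1.
have g2_leB : g2 <= B.
  by rewrite /B poisson_cdf_conv; apply: ler_poisson_conv => // m; exact: poisson_cdf_le1.
have A_le1 : A <= 1 by exact: poisson_cdf_le1.
have B_le1 : B <= 1 by exact: poisson_cdf_le1.
have linE : poisson_conv c1 (fun m => poisson_conv c2
      (fun n => poisson_cdf a1 m + poisson_cdf a2 n - 1) T) S =
    B * g1 + A * g2 - A * B.
  transitivity (poisson_conv c1 (fun m => B * poisson_cdf a1 m + (g2 - B)) S).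
    apply: eq_poisson_conv => m.
    transitivity (poisson_conv c2
        (fun n => 1 * poisson_cdf a2 n + (poisson_cdf a1 m - 1)) T).
      by apply: eq_poisson_conv => n; ring.
    by rewrite poisson_conv_affine -/g2 -/B; ring.
  by rewrite poisson_conv_affine -/g1 -/A; ring.
rewrite /countermonotone_cdf ge_max bzipm_core_cdf_ge0 //= g1E g2E.
have : g1 + g2 - 1 <= B * g1 + A * g2 - A * B.
  (* The difference is [(1 - B)(A - g1) + (1 - A)(B - g2) + (1 - A)(1 - B)]. *)
  have h1 : 0 <= (1 - B) * (A - g1) by apply: mulr_ge0; lra.
  have h2 : 0 <= (1 - A) * (B - g2) by apply: mulr_ge0; lra.
  have h3 : 0 <= (1 - A) * (1 - B) by apply: mulr_ge0; lra.
  lra.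
move/le_trans; apply; rewrite -linE.
apply: ler_poisson_conv => // m; apply: ler_poisson_conv => // n.
by rewrite le_max lexx orbT.
Qed.

Lemma bzipm_core_cdfD (b1 b2 c1 c2 a1 a2 : R) K L :
  bzipm_core_cdf (b1 + c1) (b2 + c2) a1 a2 K L =
  poisson_conv b1 (fun m =>
    poisson_conv b2 (bzipm_core_cdf c1 c2 a1 a2 m) L) K.
Proof.
rewrite /bzipm_core_cdf poisson_convD; apply: eq_poisson_conv => m.
under eq_poisson_conv => k do rewrite poisson_convD.
by rewrite poisson_conv_exchange.
Qed.

Lemma bzipm_core_cdf_shift (b1 b2 a1 a2 c1 c2 : R) K L :
  0 <= b1 -> 0 <= b2 -> 0 <= a1 -> 0 <= a2 -> 0 <= c1 -> 0 <= c2 ->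
  bzipm_core_cdf b1 b2 (a1 + c1) (a2 + c2) K L <=
  bzipm_core_cdf (b1 + c1) (b2 + c2) a1 a2 K L.
Proof.
move=> b10 b20 a10 a20 c10 c20; rewrite bzipm_core_cdfD.
apply: ler_poisson_conv => // m; apply: ler_poisson_conv => // n.
exact: countermonotone_cdf_le_core.
Qed.

End countermonotone.

Section poisson_quantile.
Variable R : realType.
Implicit Types mu u : R.

Lemma poisson_quantile_leP mu u n : 0 <= mu ->
  (poisson_quantile mu u <= n)%N <->
  u <= poisson_cdf mu n \/ forall x, poisson_cdf mu x < u.
Proof.
move=> mu0; rewrite /poisson_quantile; case: eqP => [->|_].
  split=> [_|]; last by move=> _.
  rewrite poisson_cdf0; have [|lt1u] := lerP u 1; first by left.
  by right => x; rewrite poisson_cdf0.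
case: pselect => [exu|Nexu].
  case: ex_minnP => m um minm; split => [le_mn|[un|ltu]].
  - by left; exact: le_trans um (poisson_cdf_le mu0 le_mn).
  - exact: minm.
  - by have [x ux] := exu; have := lt_le_trans (ltu x) ux; rewrite ltxx.
split=> [_|]; last by move=> _.
by right => x; rewrite ltNge; apply/negP => ux; apply: Nexu; exists x.
Qed.

Lemma poisson_quantile_le mu u n : 0 <= mu -> u < 1 ->
  (poisson_quantile mu u <= n)%N = (u <= poisson_cdf mu n).
Proof.
move=> mu0 u_lt1; apply/idP/idP => [/(poisson_quantile_leP _ _ mu0)[//|ltu]|un].
  have [m] : exists m, 1 - (1 - u) < poisson_cdf mu m.
    by apply: poisson_cdf_near1; rewrite // subr_gt0.
  by have := ltu m; lra.
by apply/(poisson_quantile_leP _ _ mu0); left.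
Qed.

End poisson_quantile.

Section measurable_preimages.
Context d (T : measurableType d) (R : realType).

Lemma measurable_preimage d' (T' : measurableType d') (f : T -> T') (A : set T') :
  measurable_fun setT f -> measurable A -> measurable (f @^-1` A).
Proof. by move=> mf mA; rewrite -[_ @^-1` _]setTI; exact: mf. Qed.

Lemma measurable_sublevel (f : T -> R) r :
  measurable_fun setT f -> measurable [set t | f t <= r].
Proof.
move=> mf; have := measurable_preimage mf (measurable_itv `]-oo, r]).
by rewrite set_itvNyc.
Qed.

Lemma measurable_strict_sublevel (f : T -> R) r :
  measurable_fun setT f -> measurable [set t | f t < r].
Proof.
move=> mf; have := measurable_preimage mf (measurable_itv `]-oo, r[).
by rewrite set_itvNyo.
Qed.

Lemma measurable_natr_fun (f : T -> nat) :
  (forall n, measurable [set t | (f t <= n)%N]) ->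
  measurable_fun setT (fun t => (f t)%:R : R).
Proof.
move=> mf _ B mB; rewrite setTI.
have fiberE n : [set t | f t = n] = [set t | (f t <= n)%N] `\` [set t | (f t < n)%N].
  apply/seteqP; split=> t /=; first by move=> <-; rewrite leqnn ltnn.
  by move=> [le_fn /negP]; rewrite -leqNgt => le_nf; apply/eqP; rewrite eqn_leq le_fn.
have mfiber n : measurable [set t | f t = n].
  rewrite fiberE; apply: measurableD => //; case: n => [|n]; last exact: mf.
  by rewrite (_ : [set _ | _] = set0) //; apply/seteqP; split => t //=; rewrite ltn0.
have -> : (fun t => (f t)%:R : R) @^-1` B =
    \bigcup_(n in [set n | B n%:R]) [set t | f t = n].
  by apply/seteqP; split=> [t Bft|t [n /= Bn ->]] //; exists (f t).
by apply: bigcup_measurable => n _.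
Qed.

End measurable_preimages.

Lemma measurable_poisson_quantile (R : realType) (mu : R) : 0 <= mu ->
  measurable_fun setT (fun u : R => (poisson_quantile mu u)%:R : R).
Proof.
move=> mu0; apply: measurable_natr_fun => n.
have -> : [set u : R | (poisson_quantile mu u <= n)%N] =
    [set u | u <= poisson_cdf mu n] `|`
    \bigcap_x [set u | poisson_cdf mu x < u].
  apply/seteqP; split=> u /=.
    move/(poisson_quantile_leP u n mu0) => [un|ltu]; first by left.
    by right => x _; exact: ltu.
  move=> [un|ltu]; apply/(poisson_quantile_leP u n mu0); first by left.
  by right => x; exact: ltu.
apply: measurableU; first by rewrite -set_itvNyc; exact: measurable_itv.
by apply: bigcapT_measurable => x; rewrite -set_itvoy; exact: measurable_itv.
Qed.

Lemma ord_natr_inj (R : numDomainType) n (i j : 'I_n) (x : R) :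
  x = i%:R -> x = j%:R -> i = j.
Proof. by move=> -> /eqP; rewrite eqr_nat => /eqP/val_inj. Qed.

Lemma measure_sandwich d (T : measurableType d) (R : realType)
    (mu : {measure set T -> \bar R}) (A B N : set T) :
  measurable A -> measurable B -> mu.-negligible N ->
  B `<=` A -> A `<=` B `|` N -> mu A = mu B.
Proof.
move=> mA mB [M [mM M0 NM]] BA ABN; apply/le_anti/andP; split.
  rewrite -(measureU0 mB mM M0); apply: le_measure; rewrite ?inE //.
    exact: measurableU.
  by move=> t /ABN[Bt|Nt]; [left|right; exact: NM].
by apply: le_measure; rewrite ?inE.
Qed.

Section bzipm_joint_cdf.
Context d (T : measurableType d) (R : realType) (P : probability T R).
Variables (W Y1 Y2 U : T -> R) (a1 a2 b1 b2 phi : R).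
Hypotheses (a1_ge0 : 0 <= a1) (a2_ge0 : 0 <= a2).
Hypotheses (b1_ge0 : 0 <= b1) (b2_ge0 : 0 <= b2).
Hypotheses (mW : measurable_fun setT W) (mY1 : measurable_fun setT Y1).
Hypotheses (mY2 : measurable_fun setT Y2) (mU : measurable_fun setT U).
Hypothesis PW1 : P [set t | W t = 1] = (1 - phi)%:E.
Hypothesis PW0 : P [set t | W t = 0] = phi%:E.
Hypothesis PY1 : forall k : nat, P [set t | Y1 t = k%:R] = (poisson_pmf b1 k)%:E.
Hypothesis PY2 : forall k : nat, P [set t | Y2 t = k%:R] = (poisson_pmf b2 k)%:E.
Hypothesis PU : forall r : R, 0 <= r <= 1 -> P [set t | U t <= r] = r%:E.
Hypothesis indep : forall A B C D : set R,
  measurable A -> measurable B -> measurable C -> measurable D ->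
  P (W @^-1` A `&` Y1 @^-1` B `&` Y2 @^-1` C `&` U @^-1` D) =
  (P (W @^-1` A) * P (Y1 @^-1` B) * P (Y2 @^-1` C) * P (U @^-1` D))%E.

(* [measureU], [measureD] and [measure_bigsetU_ord] state their conclusions for
   [P] coerced to a content, on which later rewrites with the hypotheses above
   would not fire; these restatements keep [P] as is. *)
Let P_setU (A B : set T) : measurable A -> measurable B -> A `&` B = set0 ->
  P (A `|` B) = (P A + P B)%E.
Proof. exact: measureU. Qed.

Let P_setD (A B : set T) : measurable A -> measurable B -> B `<=` A ->
  P (A `\` B) = (P A - P B)%E.
Proof.
move=> mA mB BA; rewrite measureD ?setIidr //.
by rewrite (le_lt_trans (probability_le1 P mA)) ?ltry.
Qed.

Let P_bigsetU n (F : 'I_n -> set T) : (forall i, measurable (F i)) ->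
  trivIset setT F -> P (\big[setU/set0]_(i < n) F i) = (\sum_(i < n) P (F i))%E.
Proof. exact: measure_bigsetU_ord. Qed.

Local Notation X1 := (fun t => W t * (Y1 t + (poisson_quantile a1 (U t))%:R)).
Local Notation X2 := (fun t => W t * (Y2 t + (poisson_quantile a2 (1 - U t))%:R)).

Lemma measurable_bzipm_event (x1 x2 : R) : measurable [set t | X1 t <= x1 /\ X2 t <= x2].
Proof.
have mq1 := measurableT_comp (measurable_poisson_quantile a1_ge0) mU.
have mq2 := measurableT_comp (measurable_poisson_quantile a2_ge0)
  (measurable_realfun.measurable_funB (measurable_cst (1 : R)) mU).
apply: measurableI; apply: measurable_sublevel;
  apply: measurable_realfun.measurable_funM => //;
  exact: measurable_realfun.measurable_funD.
Qed.

Lemma PU_lt (c : R) : 0 <= c <= 1 -> P [set t | U t < c] = c%:E.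
Proof.
move=> /andP[c_ge0 c_le1]; apply/le_anti/andP; split.
  rewrite -PU ?c_ge0 ?c_le1 //; apply: le_measure; rewrite ?inE.
  - exact: measurable_strict_sublevel.
  - exact: measurable_sublevel.
  - by move=> t /ltW.
apply/lee_addgt0Pr => e e_gt0; have [le_ec|lt_ce] := lerP e c.
  have -> : c%:E = (c - e)%:E + e%:E by rewrite -EFinD subrK.
  rewrite leeD2r // -PU; last by apply/andP; split; lra.
  apply: le_measure; rewrite ?inE.
  - exact: measurable_sublevel.
  - exact: measurable_strict_sublevel.
  - by move=> t /=; lra.
by rewrite -[c%:E]add0e leeD ?measure_ge0 // lee_fin ltW.
Qed.

Lemma PU_itv (c g : R) : 0 <= c <= 1 -> 0 <= g <= 1 ->
  P (U @^-1` [set u | c <= u <= g]) = (Num.max 0 (g - c))%:E.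
Proof.
move=> c01 g01.
have -> : U @^-1` [set u | c <= u <= g] = [set t | U t <= g] `\` [set t | U t < c].
  apply/seteqP; split=> t /=.
    by move=> /andP[cU Ug]; split=> //; apply/negP; rewrite -leNgt.
  by move=> [Ug /negP]; rewrite -leNgt => cU; apply/andP.
have [lt_gc|le_cg] := ltP g c.
  rewrite (_ : _ `\` _ = set0) ?measure0; last first.
    by apply/seteqP; split=> t // [/= Ug /negP]; rewrite -leNgt => cU; lra.
  by congr _%:E; apply/esym/max_idPl; lra.
rewrite P_setD; [|exact: measurable_sublevel|exact: measurable_strict_sublevel|].
  by rewrite PU // PU_lt // -EFinB; congr _%:E; apply/esym/max_idPr; lra.
by move=> t /= Uc; exact: ltW (lt_le_trans Uc le_cg).
Qed.

(* The cell where [W = 1], [Y = (k, l)] and, up to a null set, the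
   countermonotone part satisfies [Z1 <= K - k] and [Z2 <= L - l]. *)
Definition bzipm_cell (K L k l : nat) : set T :=
  W @^-1` [set 1] `&` Y1 @^-1` [set k%:R] `&` Y2 @^-1` [set l%:R] `&`
  U @^-1` [set u | 1 - poisson_cdf a2 (L - l) <= u <= poisson_cdf a1 (K - k)].

Lemma measurable_bzipm_cell K L k l : measurable (bzipm_cell K L k l).
Proof.
have mitv (c g : R) : measurable [set u | c <= u <= g].
  by rewrite -set_itvcc; exact: measurable_itv.
by repeat apply: measurableI; apply: measurable_preimage => //; exact: measurable_set1.
Qed.

Lemma P_bzipm_cell K L k l : P (bzipm_cell K L k l) =
  ((1 - phi) * poisson_pmf b1 k * poisson_pmf b2 l *
   countermonotone_cdf a1 a2 (K - k) (L - l))%:E.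
Proof.
have cdf01 a n : 0 <= a -> 0 <= poisson_cdf a n <= 1.
  by move=> a_ge0; rewrite poisson_cdf_ge0 ?poisson_cdf_le1.
have /andP[c0 c1] : 0 <= poisson_cdf a2 (L - l) <= 1 by exact: cdf01.
rewrite /bzipm_cell indep ?measurable_set1 //; last first.
  by rewrite -set_itvcc; exact: measurable_itv.
rewrite [P (W @^-1` _)]PW1 [P (Y1 @^-1` _)]PY1 [P (Y2 @^-1` _)]PY2.
rewrite PU_itv ?cdf01 //; last by apply/andP; split; lra.
by rewrite -!EFinM /countermonotone_cdf; congr (_ * Num.max 0 _)%:E; ring.
Qed.

(* Up to a null set, the event [X1 <= K /\ X2 <= L]. *)
Definition bzipm_below (K L : nat) : set T :=
  [set t | W t = 0] `|`
  \bigcup_(k < K.+1) \bigcup_(l < L.+1) bzipm_cell K L k l.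

Lemma measurable_bzipm_row K L k :
  measurable (\bigcup_(l < L.+1) bzipm_cell K L k l).
Proof.
by rewrite bigcup_mkord; apply: bigsetU_measurable => l _; exact: measurable_bzipm_cell.
Qed.

Lemma measurable_bzipm_cells K L :
  measurable (\bigcup_(k < K.+1) \bigcup_(l < L.+1) bzipm_cell K L k l).
Proof.
by rewrite bigcup_mkord; apply: bigsetU_measurable => k _; exact: measurable_bzipm_row.
Qed.

Lemma measurable_bzipm_below K L : measurable (bzipm_below K L).
Proof.
apply: measurableU (measurable_bzipm_cells K L).
exact: measurable_preimage mW (measurable_set1 0).
Qed.

Lemma P_bzipm_below K L :
  P (bzipm_below K L) = (phi + (1 - phi) * bzipm_core_cdf b1 b2 a1 a2 K L)%:E.
Proof.
have mW0 : measurable [set t | W t = 0].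
  exact: measurable_preimage mW (measurable_set1 0).
have Prow k : P (\bigcup_(l < L.+1) bzipm_cell K L k l) =
    (\sum_(l < L.+1) (1 - phi) * poisson_pmf b1 k * poisson_pmf b2 l *
      countermonotone_cdf a1 a2 (K - k) (L - l))%:E.
  rewrite bigcup_mkord P_bigsetU.
  - by rewrite -sumEFin; apply: eq_bigr => l _; exact: P_bzipm_cell.
  - by move=> l; exact: measurable_bzipm_cell.
  - by move=> i j _ _ [t [[[[_ _] Y2i] _] [[[_ _] Y2j] _]]]; exact: ord_natr_inj Y2i Y2j.
have W0_cells : [set t | W t = 0] `&`
    \bigcup_(k < K.+1) \bigcup_(l < L.+1) bzipm_cell K L k l = set0.
  apply/seteqP; split=> t // [/= W0 [k _ [l _ [[[/= W1 _] _] _]]]].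
  by move: W1; rewrite W0 => /eqP; rewrite eq_sym oner_eq0.
rewrite /bzipm_below P_setU //; last exact: measurable_bzipm_cells.
rewrite PW0 bigcup_mkord P_bigsetU.
- under eq_bigr => k _ do rewrite Prow.
  rewrite sumEFin -EFinD /bzipm_core_cdf /poisson_conv big_mkord mulr_sumr.
  congr (_ + _)%:E; apply: eq_bigr => k _; rewrite big_mkord !mulr_sumr.
  by apply: eq_bigr => l _; ring.
- by move=> k; exact: measurable_bzipm_row.
- move=> i j _ _ [t [[l _ [[[_ Y1i] _] _]] [l' _ [[[_ Y1j] _] _]]]].
  exact: ord_natr_inj Y1i Y1j.
Qed.

Definition bzipm_null : set T :=
  ~` ([set t | W t = 0] `|` [set t | W t = 1]) `|`
  [set t | forall k : nat, Y1 t <> k%:R] `|`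
  [set t | forall k : nat, Y2 t <> k%:R] `|` ~` [set t | 0 < U t < 1].

Lemma not_bzipm_null t : ~ bzipm_null t ->
  [/\ W t = 0 \/ W t = 1, exists k : nat, Y1 t = k%:R,
      exists l : nat, Y2 t = l%:R & 0 < U t < 1].
Proof.
move=> Nt; split.
- by apply: contrapT => W01; apply: Nt; do 3 left.
- by apply: contrapT => Y1N; apply: Nt; do 2 left; right => k Y1k; apply: Y1N; exists k.
- by apply: contrapT => Y2N; apply: Nt; left; right => l Y2l; apply: Y2N; exists l.
- by apply: contrapT => U01; apply: Nt; right.
Qed.

Lemma negligible_W_not01 : P.-negligible (~` ([set t | W t = 0] `|` [set t | W t = 1])).
Proof.
have mW0 := measurable_preimage mW (measurable_set1 0).
have mW1 := measurable_preimage mW (measurable_set1 1).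
have mW01 := measurableU _ _ mW0 mW1.
apply/(negligibleP P (measurableC mW01)).
suff : P (~` ([set t | W t = 0] `|` [set t | W t = 1])) = 0 by [].
rewrite probability_setC // P_setU //; first by rewrite PW0 PW1 -EFinD addrC subrK subrr.
by apply/seteqP; split=> t // [/= ->] /eqP; rewrite eq_sym oner_eq0.
Qed.

Lemma negligible_not_nat (Y : T -> R) b : 0 <= b -> measurable_fun setT Y ->
  (forall k : nat, P [set t | Y t = k%:R] = (poisson_pmf b k)%:E) ->
  P.-negligible [set t | forall k : nat, Y t <> k%:R].
Proof.
move=> b_ge0 mY PY; have mY_eq k := measurable_preimage mY (measurable_set1 k%:R).
have mN : measurable [set t | forall k : nat, Y t <> k%:R].
  rewrite (_ : [set t | _] = \bigcap_k (Y @^-1` ~` [set k%:R])).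
    apply: bigcapT_measurable => k; apply: measurable_preimage mY _.
    by apply: measurableC; exact: measurable_set1.
  by apply/seteqP; split=> t /= Nt k; [move=> _; exact: Nt | exact: Nt].
apply/(negligibleP P mN).
suff : P [set t | forall k : nat, Y t <> k%:R] = 0 by [].
apply/eqP; rewrite -measure_le0; apply/lee_addgt0Pr => e e_gt0; rewrite add0e.
have [n lt_cdf] := poisson_cdf_near1 b_ge0 e_gt0.
pose F := \bigcup_(k < n.+1) [set t | Y t = k%:R].
have mF : measurable F.
  by rewrite /F bigcup_mkord; apply: bigsetU_measurable => k _; exact: mY_eq.
have PF : P F = (poisson_cdf b n)%:E.
  rewrite /F bigcup_mkord P_bigsetU.
  - by rewrite -sumEFin; apply: eq_bigr => k _; exact: PY.
  - by move=> k; exact: mY_eq.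
  - by move=> i j _ _ [t [Yi Yj]]; exact: ord_natr_inj Yi Yj.
apply: (@le_trans _ _ (P (~` F))).
  apply: le_measure; rewrite ?inE //; first exact: measurableC.
  by move=> t /= Nt [k _]; exact: Nt.
by rewrite probability_setC // PF -EFinB lee_fin; lra.
Qed.

Lemma negligible_U_not01 : P.-negligible (~` [set t | 0 < U t < 1]).
Proof.
have mU1 := measurable_strict_sublevel 1 mU.
have mU0 := measurable_sublevel 0 mU.
have U01E : [set t | 0 < U t < 1] = [set t | U t < 1] `\` [set t | U t <= 0].
  apply/seteqP; split=> t /=.
    by move=> /andP[U0 U1]; split=> //; apply/negP; rewrite -ltNge.
  by move=> [U1 /negP]; rewrite -ltNge => U0; apply/andP.
have mU01 : measurable [set t | 0 < U t < 1] by rewrite U01E; exact: measurableD.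
apply/(negligibleP P (measurableC mU01)).
suff : P (~` [set t | 0 < U t < 1]) = 0 by [].
rewrite probability_setC // U01E P_setD // => [|t /= U0]; last by lra.
by rewrite PU_lt ?PU ?lexx ?ler01 // sube0 subee.
Qed.

Lemma negligible_bzipm_null : P.-negligible bzipm_null.
Proof.
repeat apply: negligibleU.
- exact: negligible_W_not01.
- exact: negligible_not_nat b1_ge0 mY1 PY1.
- exact: negligible_not_nat b2_ge0 mY2 PY2.
- exact: negligible_U_not01.
Qed.

Lemma bzipm_below_sub_event K L x1 x2 : K%:R <= x1 -> L%:R <= x2 ->
  bzipm_below K L `<=` [set t | X1 t <= x1 /\ X2 t <= x2].
Proof.
move=> Kx1 Lx2 t [/= W0|[k /= le_kK [l /= le_lL]]].
  by rewrite W0 !mul0r; split; [exact: le_trans Kx1|exact: le_trans Lx2].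
move=> [[[/= W1 Y1k] Y2l] /andP[cU Ug]].
have q1 : (poisson_quantile a1 (U t) <= K - k)%N.
  by apply/(poisson_quantile_leP _ _ a1_ge0); left.
have q2 : (poisson_quantile a2 (1 - U t) <= L - l)%N.
  by apply/(poisson_quantile_leP _ _ a2_ge0); left; lra.
rewrite W1 Y1k Y2l !mul1r -!natrD; split.
  by apply: le_trans Kx1; rewrite ler_nat; lia.
by apply: le_trans Lx2; rewrite ler_nat; lia.
Qed.

Lemma bzipm_event_sub_below K L x1 x2 : x1 < K.+1%:R -> x2 < L.+1%:R ->
  [set t | X1 t <= x1 /\ X2 t <= x2] `<=` bzipm_below K L `|` bzipm_null.
Proof.
move=> x1K x2L t [X1t X2t].
have [Nt|/not_bzipm_null[[W0|W1] [k Y1k] [l Y2l] /andP[U0 U1]]] :=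
  pselect (bzipm_null t); [by right|by left; left|left; right].
move: X1t X2t; rewrite W1 Y1k Y2l !mul1r -!natrD => X1t X2t.
have := le_lt_trans X1t x1K; rewrite ltr_nat => lt_X1K.
have := le_lt_trans X2t x2L; rewrite ltr_nat => lt_X2L.
have q1 : (poisson_quantile a1 (U t) <= K - k)%N by lia.
have q2 : (poisson_quantile a2 (1 - U t) <= L - l)%N by lia.
rewrite poisson_quantile_le // in q1.
rewrite poisson_quantile_le // in q2; last by lra.
exists k => //=; [lia|exists l => //=; first lia].
by split=> //; apply/andP; split=> //; lra.
Qed.

Lemma bzipm_event_sub_null x1 x2 : x1 < 0 \/ x2 < 0 ->
  [set t | X1 t <= x1 /\ X2 t <= x2] `<=` bzipm_null.
Proof.
move=> x_lt0 t [X1t X2t]; apply: contrapT.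
move=> /not_bzipm_null[[W0|W1] [k Y1k] [l Y2l] _].
  by move: X1t X2t; rewrite W0 !mul0r; case: x_lt0; lra.
move: X1t X2t; rewrite W1 Y1k Y2l !mul1r -!natrD.
have := ler0n R (k + poisson_quantile a1 (U t)).
have := ler0n R (l + poisson_quantile a2 (1 - U t)).
by case: x_lt0; lra.
Qed.

Lemma bzipm_joint_cdf_nat K L x1 x2 :
  K%:R <= x1 < K.+1%:R -> L%:R <= x2 < L.+1%:R ->
  joint_cdf P X1 X2 x1 x2 =
  (phi + (1 - phi) * bzipm_core_cdf b1 b2 a1 a2 K L)%:E.
Proof.
move=> /andP[Kx1 x1K] /andP[Lx2 x2L]; rewrite -P_bzipm_below.
apply: measure_sandwich negligible_bzipm_null _ _.
- exact: measurable_bzipm_event.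
- exact: measurable_bzipm_below.
- exact: bzipm_below_sub_event.
- exact: bzipm_event_sub_below.
Qed.

Lemma bzipm_joint_cdf_neg x1 x2 : x1 < 0 \/ x2 < 0 -> joint_cdf P X1 X2 x1 x2 = 0.
Proof.
move=> x_lt0; apply: measure_negligible (measurable_bzipm_event x1 x2) _.
exact: negligibleS (bzipm_event_sub_null x_lt0) negligible_bzipm_null.
Qed.

End bzipm_joint_cdf.

Lemma BZIPm_joint_cdf_nat d (T : measurableType d) (R : realType)
    (P : probability T R) (W Y1 Y2 U : T -> R) (lam1 lam2 theta phi : R)
    (K L : nat) (x1 x2 : R) :
  0 <= lam1 -> 0 <= lam2 -> 0 <= theta <= 1 ->
  BZIPm_inputs P W Y1 Y2 U lam1 lam2 theta phi ->
  K%:R <= x1 < K.+1%:R -> L%:R <= x2 < L.+1%:R ->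
  joint_cdf P (BZIPm_X1 W Y1 U lam1 theta) (BZIPm_X2 W Y2 U lam2 theta) x1 x2 =
  (phi + (1 - phi) * bzipm_core_cdf ((1 - theta) * lam1) ((1 - theta) * lam2)
                                   (theta * lam1) (theta * lam2) K L)%:E.
Proof.
move=> lam1_ge0 lam2_ge0 /andP[theta_ge0 theta_le1].
move=> [mW mY1 mY2 mU [[PW1 PW0] PY1 PY2 PU indep]].
by apply: bzipm_joint_cdf_nat => //; apply: mulr_ge0 => //; lra.
Qed.

Lemma BZIPm_joint_cdf_neg d (T : measurableType d) (R : realType)
    (P : probability T R) (W Y1 Y2 U : T -> R) (lam1 lam2 theta phi x1 x2 : R) :
  0 <= lam1 -> 0 <= lam2 -> 0 <= theta <= 1 ->
  BZIPm_inputs P W Y1 Y2 U lam1 lam2 theta phi -> x1 < 0 \/ x2 < 0 ->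
  joint_cdf P (BZIPm_X1 W Y1 U lam1 theta) (BZIPm_X2 W Y2 U lam2 theta) x1 x2 = 0%E.
Proof.
move=> lam1_ge0 lam2_ge0 /andP[theta_ge0 theta_le1].
move=> [mW mY1 mY2 mU [[PW1 PW0] PY1 PY2 PU indep]].
apply: (bzipm_joint_cdf_neg (b1 := (1 - theta) * lam1) (b2 := (1 - theta) * lam2)
  (phi := phi)) => //; apply: mulr_ge0 => //; lra.
Qed.

Unset Implicit Arguments.

Theorem corollary2 (R : realType)
  (d : measure_display) (T : measurableType d) (P : probability T R)
  (W Y1 Y2 U : T -> R)
  (d' : measure_display) (T' : measurableType d') (P' : probability T' R)
  (W' Y1' Y2' U' : T' -> R)
  (lam1 lam2 theta theta' phi : R) :
  0 < lam1 -> 0 < lam2 -> 0 <= phi < 1 ->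
  0 <= theta -> theta < theta' -> theta' <= 1 ->
  BZIPm_inputs P W Y1 Y2 U lam1 lam2 theta phi ->
  BZIPm_inputs P' W' Y1' Y2' U' lam1 lam2 theta' phi ->
  forall x1 x2 : R,
    (joint_cdf P' (BZIPm_X1 W' Y1' U' lam1 theta') (BZIPm_X2 W' Y2' U' lam2 theta') x1 x2
     <= joint_cdf P (BZIPm_X1 W Y1 U lam1 theta) (BZIPm_X2 W Y2 U lam2 theta) x1 x2)%E.
Proof.
move=> lam1_gt0 lam2_gt0 /andP[phi_ge0 phi_lt1] theta_ge0 lt_theta theta'_le1.
move=> inputs inputs' x1 x2.
have [lam1_ge0 lam2_ge0] := conj (ltW lam1_gt0) (ltW lam2_gt0).
have theta01 : 0 <= theta <= 1 by apply/andP; split; lra.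
have theta'01 : 0 <= theta' <= 1 by apply/andP; split; lra.
have [x_lt0|] := boolP ((x1 < 0) || (x2 < 0)).
  rewrite (BZIPm_joint_cdf_neg lam1_ge0 lam2_ge0 theta'01 inputs') ?measure_ge0 //.
  exact/orP.
rewrite negb_or -!leNgt => /andP[x1_ge0 x2_ge0].
have [itv1 itv2] := (truncn_itv x1_ge0, truncn_itv x2_ge0).
rewrite (BZIPm_joint_cdf_nat lam1_ge0 lam2_ge0 theta'01 inputs' itv1 itv2).
rewrite (BZIPm_joint_cdf_nat lam1_ge0 lam2_ge0 theta01 inputs itv1 itv2).
rewrite lee_fin lerD2l; apply: ler_wpM2l; first lra.
have -> : theta' * lam1 = theta * lam1 + (theta' - theta) * lam1 by ring.
have -> : theta' * lam2 = theta * lam2 + (theta' - theta) * lam2 by ring.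
have -> : (1 - theta) * lam1 = (1 - theta') * lam1 + (theta' - theta) * lam1 by ring.
have -> : (1 - theta) * lam2 = (1 - theta') * lam2 + (theta' - theta) * lam2 by ring.
by apply: bzipm_core_cdf_shift; apply: mulr_ge0; lra.
Qed.
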